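(* Let $\mathbf{C}$ be the Cantor set with a fixed compatible metric $\mathrm{dist}$, let $X \subset \mathbf{C}$, and let $f : X \to Y$ be a clopen-LC function from $X$ onto a separable metrizable space $Y$. Assume $f^{-1}(y)$ is compact for every $y \in Y$. For $n = 1,2,\dots$, let $X_n$ be the union of all fibers $f^{-1}(y)$, $y \in Y$, with the following property: there exist a sequence $y_k \to y$ in $Y$ with $y_k \neq y$ for all $k$ and $y_k \neq y_j$ for $k \neq j$, points $x_k \in f^{-1}(y_k)$, and a point $\tilde{x}_y \in \mathbf{C}$ such that $x_k \to \tilde{x}_y$ and $\mathrm{dist}(\tilde{x}_y, f^{-1}(y)) > 1/n$. Let $Y_n = f(X_n)$. Then the restriction $f|_{X_n} : X_n \to Y_n$ is an open function.
   Context: All spaces are separable metrizable. A subset of a topological space is an LC-set if it is the intersection of an open set and a closed set. A function is open if it maps open sets to open sets of its image space. A function $f : X \to Y$ is clopen-LC if for every subset $U \subset X$ that is clopen in $X$, the image $f(U)$ is an LC-set in $Y$. Note that $X_n = f^{-1}(Y_n)$ since $X_n$ is a union of fibers. *)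

From Stdlib Require Import Reals List.
Open Scope R_scope.

(* The Cantor set, modelled as the Cantor space 2^N. *)
Definition Cantor := nat -> bool.

Definition agree_upto (n : nat) (a b : Cantor) : Prop :=
  forall i, (i < n)%nat -> a i = b i.

Record is_metric {T : Type} (d : T -> T -> R) : Prop := {
  metric_nonneg : forall x y, 0 <= d x y;
  metric_eq0 : forall x y, d x y = 0 <-> x = y;
  metric_sym : forall x y, d x y = d y x;
  metric_tri : forall x y z, d x z <= d x y + d y z }.

Definition compatible_Cantor_metric (d : Cantor -> Cantor -> R) : Prop :=
  is_metric d /\
  (forall x eps, 0 < eps -> exists n, forall y, agree_upto n x y -> d x y < eps) /\
  (forall x n, exists eps, 0 < eps /\ forall y, d x y < eps -> agree_upto n x y).

Definition open_in {T : Type} (d : T -> T -> R) (S U : T -> Prop) : Prop :=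
  (forall x, U x -> S x) /\
  (forall x, U x -> exists eps, 0 < eps /\
     forall y, S y -> d x y < eps -> U y).

Definition open_set {T : Type} (d : T -> T -> R) (U : T -> Prop) : Prop :=
  open_in d (fun _ => True) U.

Definition closed_set {T : Type} (d : T -> T -> R) (F : T -> Prop) : Prop :=
  open_set d (fun x => ~ F x).

Definition clopen_in {T : Type} (d : T -> T -> R) (S U : T -> Prop) : Prop :=
  open_in d S U /\ open_in d S (fun x => S x /\ ~ U x).

Definition LC_set {T : Type} (d : T -> T -> R) (V : T -> Prop) : Prop :=
  exists O F, open_set d O /\ closed_set d F /\ forall y, V y <-> (O y /\ F y).

Definition image {A B : Type} (f : A -> B) (U : A -> Prop) : B -> Prop :=
  fun y => exists x, U x /\ f x = y.

(* separability: a countable dense subset (allowing the empty space). *)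
Definition separable {T : Type} (d : T -> T -> R) : Prop :=
  exists D : nat -> option T, forall y eps, 0 < eps ->
    exists k z, D k = Some z /\ d y z < eps.

Definition compact_set {T : Type} (d : T -> T -> R) (K : T -> Prop) : Prop :=
  forall (I : Type) (U : I -> T -> Prop),
    (forall i, open_set d (U i)) ->
    (forall x, K x -> exists i, U i x) ->
    exists l : list I, forall x, K x -> exists i, In i l /\ U i x.

Definition seq_cv {T : Type} (d : T -> T -> R) (u : nat -> T) (l : T) : Prop :=
  forall eps, 0 < eps -> exists N, forall k, (N <= k)%nat -> d (u k) l < eps.

(* dist(x, A) > r, where dist(x, A) = inf_{z in A} d x z (inf of the empty set = +oo):
   some lower bound of {d x z | z in A} is strictly bigger than r. *)
Definition dist_set_gt {T : Type} (d : T -> T -> R) (x : T) (A : T -> Prop) (r : R) : Prop :=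
  exists r', r < r' /\ forall z, A z -> r' <= d x z.

Definition subX (X : Cantor -> Prop) := {x : Cantor | X x}.

Definition dsub (d : Cantor -> Cantor -> R) (X : Cantor -> Prop) : subX X -> subX X -> R :=
  fun a b => d (proj1_sig a) (proj1_sig b).

Definition fiber (X : Cantor -> Prop) {Y : Type} (f : subX X -> Y) (y : Y) : Cantor -> Prop :=
  fun x => exists h : X x, f (exist _ x h) = y.

Definition clopen_LC (d : Cantor -> Cantor -> R) (X : Cantor -> Prop) {Y : Type}
  (dY : Y -> Y -> R) (f : subX X -> Y) : Prop :=
  forall U : subX X -> Prop, clopen_in (dsub d X) (fun _ => True) U ->
    LC_set dY (image f U).

Definition Pn (d : Cantor -> Cantor -> R) (X : Cantor -> Prop) {Y : Type}
  (dY : Y -> Y -> R) (f : subX X -> Y) (n : nat) (y : Y) : Prop :=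
  exists (yk : nat -> Y) (xk : nat -> Cantor) (xt : Cantor),
    seq_cv dY yk y /\
    (forall k, yk k <> y) /\
    (forall k j, k <> j -> yk k <> yk j) /\
    (forall k, fiber X f (yk k) (xk k)) /\
    seq_cv d xk xt /\
    dist_set_gt d xt (fiber X f y) (1 / INR n).

Definition Xn (d : Cantor -> Cantor -> R) (X : Cantor -> Prop) {Y : Type}
  (dY : Y -> Y -> R) (f : subX X -> Y) (n : nat) : subX X -> Prop :=
  fun x => Pn d X dY f n (f x).

Definition Yn (d : Cantor -> Cantor -> R) (X : Cantor -> Prop) {Y : Type}
  (dY : Y -> Y -> R) (f : subX X -> Y) (n : nat) : Y -> Prop :=
  image f (Xn d X dY f n).

Definition open_restriction {A B : Type} (dA : A -> A -> R) (dB : B -> B -> R)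
  (f : A -> B) (S : A -> Prop) : Prop :=
  forall U, open_in dA S U -> open_in dB (image f S) (image f U).

(* Suppose f(U) is not a neighbourhood of y0 = f(x0) in Y_n, for some open U of X_n.  Then
   points y_k -> y0 of Y_n \ f(U) come with limits x~_k of points of nearby fibers at distance
   > 1/n from the fiber of y_k; let x~ be a cluster point of the x~_k.  The clopen set
   S = B(x0) u B(x~), for small cylinders B, has an LC image f(S) = O n F.  For large k,
   y_k lies in O (as y0 does) and in F (being a limit of points of f(B(x~))), so y_k = f(s)
   with s in S.  s cannot lie in B(x~), which is too close to x~_k; so s lies in B(x0) and
   y_k is in f(U), a contradiction. *)
From Stdlib Require Import Reals Lra Lia Classical ClassicalEpsilon.
(* Imported after Reals, whose [open_set] would otherwise shadow the one of Defs. *)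
From Pilot Require Import Defs.
Open Scope R_scope.

Definition frequently_agree (a : nat -> Cantor) (p : Cantor) (m : nat) : Prop :=
  forall N, exists k, (N <= k)%nat /\ agree_upto m p (a k).

(* The prefix of length m of the cluster point: each new bit is chosen so that infinitely
   many terms of a still agree with the prefix (one of the two choices always works). *)
Fixpoint frequent_prefix (a : nat -> Cantor) (m : nat) : Cantor :=
  match m with
  | O => fun _ => false
  | S m' =>
    let extend (b : bool) (i : nat) := if Nat.eqb i m' then b else frequent_prefix a m' i in
    if excluded_middle_informative (frequently_agree a (extend true) (S m'))
    then extend true else extend false
  end.

Lemma frequent_prefix_frequently_agree a m : frequently_agree a (frequent_prefix a m) m.
Proof.
  induction m as [|m IH].
  - intros N. exists N. split; [lia|]. intros i Hi. lia.
  - simpl. destruct (excluded_middle_informative _) as [Htrue|Htrue]; [exact Htrue|].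
    set (extend := fun (b : bool) i => if Nat.eqb i m then b else frequent_prefix a m i).
    assert (agree_extend : forall k b, agree_upto m (frequent_prefix a m) (a k) ->
              a k m = b -> agree_upto (S m) (extend b) (a k)).
    { intros k b Hag Hb i Hi. unfold extend.
      destruct (Nat.eqb i m) eqn:E.
      - apply Nat.eqb_eq in E. subst. reflexivity.
      - apply Nat.eqb_neq in E. apply Hag. lia. }
    assert (Hfin : exists N1, forall k, (N1 <= k)%nat -> ~ agree_upto (S m) (extend true) (a k)).
    { apply NNPP; intro Hc. apply Htrue. intro N. apply NNPP; intro Hc2.
      apply Hc. exists N. intros k Hk Hag. apply Hc2. exists k. auto. }
    destruct Hfin as [N1 HN1]. intro N.
    destruct (IH (Nat.max N N1)) as [k [Hk Hag]].
    exists k. split; [lia|]. apply agree_extend; [exact Hag|].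
    destruct (a k m) eqn:E; [|reflexivity].
    exfalso. apply (HN1 k); [lia|]. apply agree_extend; assumption.
Qed.

Lemma frequent_prefix_stable a i m : (i < m)%nat -> frequent_prefix a m i = frequent_prefix a (S i) i.
Proof.
  induction m as [|m IH]; intros H; [lia|].
  destruct (Nat.eq_dec i m) as [->|Hne]; [reflexivity|].
  rewrite <- IH by lia. simpl.
  destruct (excluded_middle_informative _);
  destruct (Nat.eqb i m) eqn:E; auto; apply Nat.eqb_eq in E; lia.
Qed.

Lemma cantor_cluster_point (a : nat -> Cantor) :
  exists x, forall m N, exists k, (N <= k)%nat /\ agree_upto m x (a k).
Proof.
  exists (fun i => frequent_prefix a (S i) i). intros m N.
  destruct (frequent_prefix_frequently_agree a m N) as [k [Hk Hag]].
  exists k. split; [exact Hk|].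
  intros i Hi. rewrite <- (frequent_prefix_stable a i m Hi). apply Hag, Hi.
Qed.

Definition clopen_set {T : Type} (d : T -> T -> R) (A : T -> Prop) : Prop :=
  open_set d A /\ closed_set d A.

Lemma clopen_setU {T : Type} (d : T -> T -> R) (A B : T -> Prop) :
  clopen_set d A -> clopen_set d B -> clopen_set d (fun z => A z \/ B z).
Proof.
  intros [[_ HA] [_ HcA]] [[_ HB] [_ HcB]]. split; split; auto.
  - intros x [Ax|Bx].
    + destruct (HA x Ax) as [e [He Hy]]. exists e. split; auto.
    + destruct (HB x Bx) as [e [He Hy]]. exists e. split; auto.
  - intros x HnAB.
    destruct (HcA x (fun Ax => HnAB (or_introl Ax))) as [e1 [He1 Hy1]].
    destruct (HcB x (fun Bx => HnAB (or_intror Bx))) as [e2 [He2 Hy2]].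
    exists (Rmin e1 e2). split; [apply Rmin_pos; assumption|].
    pose proof (Rmin_l e1 e2). pose proof (Rmin_r e1 e2).
    intros y _ Hxy [Ay|By]; [apply (Hy1 y I) | apply (Hy2 y I)]; auto; lra.
Qed.

Lemma clopen_in_subX (d : Cantor -> Cantor -> R) (X : Cantor -> Prop) (A : Cantor -> Prop) :
  clopen_set d A -> clopen_in (dsub d X) (fun _ => True) (fun s => A (proj1_sig s)).
Proof.
  intros [[_ HA] [_ HcA]]. split; split; auto.
  - intros s As. destruct (HA _ As) as [e [He Hy]]. exists e. split; auto.
  - intros s [_ nAs]. destruct (HcA _ nAs) as [e [He Hy]]. exists e. split; auto.
Qed.

Lemma agree_upto_clopen (d : Cantor -> Cantor -> R) (hd : compatible_Cantor_metric d) m w :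
  clopen_set d (agree_upto m w).
Proof.
  destruct hd as [_ [_ Hcyl]]. split; split; auto.
  - intros z Hz. destruct (Hcyl z m) as [e [He Hy]]. exists e. split; auto.
    intros y _ Hzy i Hi. rewrite (Hz i Hi). apply (Hy y Hzy i Hi).
  - intros z Hz. destruct (Hcyl z m) as [e [He Hy]]. exists e. split; auto.
    intros y _ Hzy Hw. apply Hz. intros i Hi. rewrite (Hw i Hi). symmetry. apply (Hy y Hzy i Hi).
Qed.

Definition adherent {T : Type} (d : T -> T -> R) (A : T -> Prop) (y : T) : Prop :=
  forall eps, 0 < eps -> exists z, A z /\ d y z < eps.

Lemma closed_set_adherent {T : Type} (d : T -> T -> R) (F : T -> Prop) y :
  closed_set d F -> adherent d F y -> F y.
Proof.
  intros [_ HF] Hy. apply NNPP; intro nFy.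
  destruct (HF y nFy) as [e [He Hball]].
  destruct (Hy e He) as [z [Fz Hyz]]. exact (Hball z I Hyz Fz).
Qed.

Lemma LC_set_locally_closed {T : Type} (d : T -> T -> R) (V : T -> Prop) y0 :
  LC_set d V -> V y0 ->
  exists eps, 0 < eps /\ forall y, d y0 y < eps -> adherent d V y -> V y.
Proof.
  intros [O [F [[_ HO] [HF HV]]]] Vy0.
  destruct (HO y0 (proj1 (proj1 (HV y0) Vy0))) as [e [He Hball]].
  exists e. split; [exact He|]. intros y Hy Hadh. apply HV. split; [exact (Hball y I Hy)|].
  apply (closed_set_adherent d); [exact HF|].
  intros eps Heps. destruct (Hadh eps Heps) as [z [Vz Hyz]].
  exists z. split; [exact (proj2 (proj1 (HV z) Vz))|exact Hyz].
Qed.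

Lemma not_nbhd_sequence {T : Type} (d : T -> T -> R) (hd : is_metric d) (P Q : T -> Prop) y0 :
  ~ (exists eps, 0 < eps /\ forall y, P y -> d y0 y < eps -> Q y) ->
  exists yk : nat -> T, seq_cv d yk y0 /\ forall k, P (yk k) /\ ~ Q (yk k).
Proof.
  intros Hnot.
  assert (Hk : forall k : nat, exists y, (P y /\ ~ Q y) /\ d y0 y < / INR (S k)).
  { intro k. apply NNPP; intro Hc. apply Hnot. exists (/ INR (S k)). split.
    { apply Rinv_0_lt_compat, lt_0_INR. lia. }
    intros y Py Hy. apply NNPP; intro nQy. apply Hc. exists y. auto. }
  destruct (choice _ Hk) as [yk Hyk].
  exists yk. split; [|intro k; exact (proj1 (Hyk k))].
  intros eps Heps. destruct (archimed_cor1 eps Heps) as [N [HN N_pos]].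
  exists N. intros k Hk'. rewrite (metric_sym _ hd).
  apply Rlt_le_trans with (1 := proj2 (Hyk k)), Rle_trans with (2 := Rlt_le _ _ HN).
  apply Rinv_le_contravar; [apply lt_0_INR; exact N_pos|apply le_INR; lia].
Qed.

Section FiberLimits.

Variables (d : Cantor -> Cantor -> R) (X : Cantor -> Prop) (Y : Type) (dY : Y -> Y -> R)
  (f : subX X -> Y).
Hypotheses (hd : compatible_Cantor_metric d) (hdY : is_metric dY).

(* [xt] plays the role of the point x~_y in the definition of X_n. *)
Definition far_fiber_limit (r : R) (y : Y) (xt : Cantor) : Prop :=
  (exists (zk : nat -> Y) (pk : nat -> Cantor), seq_cv dY zk y /\
     (forall j, fiber X f (zk j) (pk j)) /\ seq_cv d pk xt) /\
  dist_set_gt d xt (fiber X f y) r.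

Lemma Yn_far_fiber_limit n y :
  image f (Xn d X dY f n) y -> exists xt, far_fiber_limit (1 / INR n) y xt.
Proof.
  intros [x [Hx <-]]. destruct Hx as [yk [xk [xt [Hyk [_ [_ [Hfib [Hxk Hdist]]]]]]]].
  exists xt. split; [exists yk, xk|]; auto.
Qed.

Lemma adherent_image_fiber_limit (A : Cantor -> Prop) (zk : nat -> Y) (pk : nat -> Cantor) y xt :
  open_set d A -> A xt -> seq_cv dY zk y -> (forall j, fiber X f (zk j) (pk j)) ->
  seq_cv d pk xt -> adherent dY (image f (fun s => A (proj1_sig s))) y.
Proof.
  intros [_ HA] Axt Hzk Hfib Hpk eps Heps.
  destruct (HA xt Axt) as [e [He Hball]].
  destruct (Hzk eps Heps) as [j1 Hj1]. destruct (Hpk e He) as [j2 Hj2].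
  destruct (Hfib (Nat.max j1 j2)) as [h Hh].
  exists (f (exist _ _ h)). split.
  - exists (exist _ _ h). split; [|reflexivity]. simpl. apply Hball; [exact I|].
    rewrite (metric_sym _ (proj1 hd)). apply Hj2. lia.
  - rewrite Hh, (metric_sym _ hdY). apply Hj1. lia.
Qed.

Hypothesis hf : clopen_LC d X dY f.

Lemma far_fiber_limits_preimage_near (r : R) (hr : 0 < r) (x0 : subX X) (m : nat)
  (yk : nat -> Y) (xtk : nat -> Cantor) :
  seq_cv dY yk (f x0) -> (forall k, far_fiber_limit r (yk k) (xtk k)) ->
  exists k s, agree_upto m (proj1_sig x0) (proj1_sig s) /\ f s = yk k.
Proof.
  intros Hyk Hfar.
  pose proof hd as [hm [Hball _]].
  destruct (cantor_cluster_point xtk) as [xt Hxt].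
  destruct (Hball xt (r / 2)) as [m' Hm']; [lra|].
  set (A := fun z => agree_upto m (proj1_sig x0) z \/ agree_upto m' xt z).
  assert (A_clopen : clopen_set d A) by (apply clopen_setU; apply agree_upto_clopen, hd).
  set (V := image f (fun s => A (proj1_sig s))).
  assert (V_x0 : V (f x0)) by (exists x0; split; [left; intros i _|]; reflexivity).
  destruct (LC_set_locally_closed dY V (f x0) (hf _ (clopen_in_subX d X A A_clopen)) V_x0)
    as [eps [Heps V_closed]].
  destruct (Hyk eps Heps) as [N HN].
  destruct (Hxt m' N) as [k [Hk Hagk]].
  destruct (Hfar k) as [[zk [pk [Hzk [Hfib Hpk]]]] [r' [Hrr' Hdist]]].
  assert (V_yk : V (yk k)).
  { apply V_closed.
    - rewrite (metric_sym _ hdY). apply HN, Hk.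
    - apply (adherent_image_fiber_limit A zk pk _ (xtk k)); auto.
      + exact (proj1 A_clopen).
      + right. exact Hagk. }
  destruct V_yk as [s [[Hs|Hs] Hfs]]; [exists k, s; auto|].
  exfalso.
  assert (Hfiber : fiber X f (yk k) (proj1_sig s)) by (destruct s as [z hz]; exists hz; exact Hfs).
  pose proof (Hdist _ Hfiber). pose proof (Hm' _ Hs). pose proof (Hm' _ Hagk).
  pose proof (metric_tri _ hm (xtk k) xt (proj1_sig s)).
  rewrite (metric_sym _ hm (xtk k) xt) in *. lra.
Qed.

End FiberLimits.

Theorem lemma1 (d : Cantor -> Cantor -> R) (hd : compatible_Cantor_metric d)
  (X : Cantor -> Prop) (Y : Type) (dY : Y -> Y -> R)
  (hdY : is_metric dY) (hsep : separable dY)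
  (f : subX X -> Y) (hf : clopen_LC d X dY f)
  (honto : forall y : Y, exists x : subX X, f x = y)
  (hcpt : forall y : Y, compact_set d (fiber X f y))
  (n : nat) (hn : (1 <= n)%nat) :
  open_restriction (dsub d X) dY f (Xn d X dY f n).
Proof.
  intros U [U_sub U_open]. split.
  { intros y [x [Ux <-]]. exists x. auto. }
  intros y [x0 [Ux0 <-]].
  destruct (U_open x0 Ux0) as [eps [Heps U_ball]].
  destruct (proj1 (proj2 hd) (proj1_sig x0) eps Heps) as [m Hm].
  apply NNPP; intro not_nbhd.
  destruct (not_nbhd_sequence dY hdY _ _ _ not_nbhd) as [yk [Hyk Hyk_bad]].
  destruct (choice _ (fun k => Yn_far_fiber_limit d X Y dY f n (yk k) (proj1 (Hyk_bad k))))
    as [xtk Hxtk].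
  assert (Hr : 0 < 1 / INR n) by (apply Rdiv_lt_0_compat; [lra|apply lt_0_INR; lia]).
  destruct (far_fiber_limits_preimage_near d X Y dY f hd hdY hf _ Hr x0 m yk xtk Hyk Hxtk)
    as [k [s [Hs Hfs]]].
  apply (proj2 (Hyk_bad k)). exists s. split; [|exact Hfs].
  apply U_ball.
  - destruct (proj1 (Hyk_bad k)) as [x [Hx Hfx]].
    unfold Xn. rewrite Hfs, <- Hfx. exact Hx.
  - apply Hm, Hs.
Qed.
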